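(* Let $L=\{a^nb^m : n,m\in\mathbb{N},\ m\le n\}$ over the alphabet $\{a,b\}$. Then $L\in\mathrm{RN}_1$ and $L\notin\mathrm{RH}$, i.e. $L$ is recognised by some (nondeterministic) $1$-VASS under reachability acceptance but by no history-deterministic $k$-VASS (for any $k$) under reachability acceptance.
   Context: Fix a finite alphabet $\Sigma$. A $k$-dimensional vector addition system with states ($k$-VASS) is a tuple $(Q,q_0,F,\delta)$ where $Q$ is a finite set of states, $q_0\in Q$ is initial, $F\subseteq Q$ is the set of accepting states, and $\delta\subseteq Q\times\Sigma\times\mathbb{Z}^k\times Q$ is a finite set of transitions (no $\varepsilon$-transitions). A run on a word $w=a_1\cdots a_n$ is a sequence of transitions $(p_{i-1},a_i,d_i,p_i)$ with $p_0=q_0$ such that the counter vectors $v_0=\vec 0$, $v_i=v_{i-1}+d_i$ all lie in $\mathbb{N}^k$. Under reachability acceptance the run is accepting if $p_n\in F$ and $v_n=\vec 0$. The language is the set of words having an accepting run. A VASS is history-deterministic if there is a resolver, i.e. a function $r$ mapping each finite sequence of transitions and each letter $a$ to a transition labelled $a$, such that for every word $w$ in the language, the sequence of transitions obtained by successively applying $r$ to the letters of $w$ is a run on $w$ (counters stay nonnegative) and is accepting. $\mathrm{RN}_k$ (resp. $\mathrm{RH}_k$) is the class of languages recognised by arbitrary (resp. history-deterministic) $k$-VASS under reachability acceptance, and $\mathrm{RH}=\bigcup_{k\ge1}\mathrm{RH}_k$. *)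

From HB Require Import structures.
From mathcomp Require Import all_boot all_order all_algebra.
Set Implicit Arguments. Unset Strict Implicit. Unset Printing Implicit Defensive.
Import Order.TTheory GRing.Theory Num.Theory.

Inductive ab := a | b.
Definition ab2bool (x : ab) : bool := if x is a then true else false.
Definition bool2ab (x : bool) : ab := if x then a else b.
Lemma ab2boolK : cancel ab2bool bool2ab. Proof. by case. Qed.
HB.instance Definition _ := Finite.copy ab (can_type ab2boolK).

Section VASS.
Variables (Sigma : finType) (k : nat) (Q : finType).

Definition vec := {ffun 'I_k -> int}.
Definition transition := (Q * Sigma * vec * Q)%type.

(* A k-VASS with state set Q: initial state, accepting states, finite
   set of transitions (no epsilon transitions). *)
Record vass := Vass {
  q0 : Q;
  final : {set Q};
  delta : seq transition
}.

Definition tsrc (t : transition) : Q := t.1.1.1.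
Definition tlab (t : transition) : Sigma := t.1.1.2.
Definition tupd (t : transition) : vec := t.1.2.
Definition ttgt (t : transition) : Q := t.2.

Definition vadd (v d : vec) : vec := [ffun i => (v i + d i)%R].
Definition vzero : vec := [ffun _ => 0%R].

Fixpoint run_end (V : vass) (p : Q) (v : vec) (ts : seq transition)
  (w : seq Sigma) : option (Q * vec) :=
  match ts, w with
  | [::], [::] => Some (p, v)
  | t :: ts', x :: w' =>
      if [&& t \in delta V, tsrc t == p, tlab t == x &
             [forall i, (0 <= vadd v (tupd t) i)%R]]
      then run_end V (ttgt t) (vadd v (tupd t)) ts' w'
      else None
  | _, _ => None
  end.

Definition accepting_run (V : vass) (ts : seq transition) (w : seq Sigma) : Prop :=
  exists q, run_end V (q0 V) vzero ts w = Some (q, vzero) /\ q \in final V.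

Definition accepts (V : vass) (w : seq Sigma) : Prop :=
  exists ts, accepting_run V ts w.

Fixpoint resolve_aux (r : seq transition -> Sigma -> transition)
  (hist : seq transition) (w : seq Sigma) : seq transition :=
  match w with
  | [::] => [::]
  | x :: w' => let t := r hist x in t :: resolve_aux r (rcons hist t) w'
  end.
Definition resolve r w := resolve_aux r [::] w.

Definition is_resolver (V : vass) (r : seq transition -> Sigma -> transition) :=
  forall hist x, r hist x \in delta V /\ tlab (r hist x) = x.

Definition history_deterministic (V : vass) : Prop :=
  exists r, is_resolver V r /\
    forall w, accepts V w -> accepting_run V (resolve r w) w.

End VASS.

Definition L_anbm (w : seq ab) : Prop :=
  exists n m : nat, (m <= n)%N /\ w = nseq n a ++ nseq m b.

Definition recognises (Sigma : finType) (k : nat) (Q : finType)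
  (V : vass Sigma k Q) (Lang : seq Sigma -> Prop) : Prop :=
  forall w, accepts V w <-> Lang w.

Definition in_RN (Sigma : finType) (k : nat) (Lang : seq Sigma -> Prop) : Prop :=
  exists (Q : finType) (V : vass Sigma k Q), recognises V Lang.

Definition in_RH (Sigma : finType) (Lang : seq Sigma -> Prop) : Prop :=
  exists (k : nat), (1 <= k)%N /\
    exists (Q : finType) (V : vass Sigma k Q),
      history_deterministic V /\ recognises V Lang.

(* A 1-VASS recognises L by guessing which a's increment the counter and
   decrementing it on every b.  Against a history-deterministic VASS with
   state set Q, feed it the words a^|Q| b^j, j <= |Q|: they all lie in L, so
   the resolver's runs on them accept, and two of them, for i < j, end in the
   same state with zero counters.  The segment of the resolver's run reading
   b^(j-i) is then a loop that can be repeated inside its accepting run on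
   a^|Q| b^|Q|, giving an accepting run on a^|Q| b^(|Q|+j-i), outside L. *)

From mathcomp Require Import all_boot all_order all_algebra.
From mathcomp Require Import zify.
Set Implicit Arguments.
Unset Strict Implicit.
Unset Printing Implicit Defensive.
Import Order.TTheory GRing.Theory Num.Theory.

Section Runs.
Variables (S : finType) (k : nat) (Q : finType) (V : vass S k Q).

Lemma run_end_cat p v ts1 ts2 w1 w2 :
  size ts1 = size w1 ->
  run_end V p v (ts1 ++ ts2) (w1 ++ w2) =
  obind (fun r => run_end V r.1 r.2 ts2 w2) (run_end V p v ts1 w1).
Proof.
elim: ts1 w1 p v => [|t ts IH] [|x w] //= p v [size_ts].
by case: ifP => // _; apply: IH.
Qed.

Lemma run_end_loop p (t : transition S k Q) j (v : vec k) :
  t \in delta V -> tsrc t = p -> ttgt t = p ->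
  (forall i, 0 <= v i)%R -> (forall i, 0 <= v i + tupd t i *+ j)%R ->
  run_end V p v (nseq j t) (nseq j (tlab t)) =
  Some (p, [ffun i => v i + tupd t i *+ j]%R).
Proof.
move=> tV tsrcE ttgtE; elim: j v => [|j IH] v v_ge0 vj_ge0 /=.
  by congr (Some (_, _)); apply/ffunP => i; rewrite ffunE addr0.
(* the counters move monotonically along the loop *)
have vt_ge0 i : (0 <= v i + tupd t i)%R.
  case: (lerP 0 (tupd t i)) => [d_ge0|d_lt0]; first exact: addr_ge0.
  apply: le_trans (vj_ge0 i) _; rewrite mulrS addrA -[leRHS]addr0 lerD2l.
  exact: mulrn_wle0 (ltW d_lt0).
rewrite tV tsrcE !eqxx /=; have -> : [forall i, 0 <= vadd v (tupd t) i]%R.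
  by apply/forallP => i; rewrite ffunE.
rewrite ttgtE IH => [|i|i]; rewrite ?ffunE //.
- by congr (Some (_, _)); apply/ffunP => i; rewrite !ffunE mulrS addrA.
- by rewrite -addrA -mulrS.
Qed.

Variable r : seq (transition S k Q) -> S -> transition S k Q.

Lemma size_resolve_aux hist w : size (resolve_aux r hist w) = size w.
Proof. by elim: w hist => [|x w IH] hist //=; rewrite IH. Qed.

Lemma resolve_aux_cat hist w1 w2 :
  resolve_aux r hist (w1 ++ w2) =
  resolve_aux r hist w1 ++ resolve_aux r (hist ++ resolve_aux r hist w1) w2.
Proof.
elim: w1 hist => [|x w IH] hist /=; first by rewrite cats0.
by rewrite IH cat_rcons.
Qed.

Lemma resolve_cat w1 w2 :
  resolve r (w1 ++ w2) = resolve r w1 ++ resolve_aux r (resolve r w1) w2.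
Proof. exact: resolve_aux_cat. Qed.

Lemma resolve_pump u v z q :
  run_end V (q0 V) (vzero k) (resolve r u) u = Some (q, vzero k) ->
  run_end V (q0 V) (vzero k) (resolve r (u ++ v)) (u ++ v) = Some (q, vzero k) ->
  accepting_run V (resolve r (u ++ v ++ z)) (u ++ v ++ z) ->
  accepts V (u ++ v ++ v ++ z).
Proof.
move=> run_u run_uv [qf [run_uvz qf_final]].
set loop := resolve_aux r (resolve r u) v.
set tail := resolve_aux r (resolve r (u ++ v)) z.
have size_u : size (resolve r u) = size u by rewrite size_resolve_aux.
have size_loop : size loop = size v by rewrite size_resolve_aux.
have run_loop : run_end V q (vzero k) loop v = Some (q, vzero k).
  by move: run_uv; rewrite resolve_cat run_end_cat // run_u.
have run_tail : run_end V q (vzero k) tail z = Some (qf, vzero k).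
  have size_uv : size (resolve r (u ++ v)) = size (u ++ v).
    by rewrite size_resolve_aux.
  by move: run_uvz; rewrite catA resolve_cat run_end_cat // run_uv.
exists (resolve r u ++ loop ++ loop ++ tail), qf; split => //.
by rewrite run_end_cat // run_u /= run_end_cat // run_loop /= run_end_cat // run_loop.
Qed.

End Runs.

Lemma nat_fun_collision (T : finType) (f : nat -> T) :
  exists i j, [/\ i < j, j <= #|T| & f i = f j].
Proof.
pose g (j : 'I_#|T|.+1) := f j.
have /injectivePn [i [j neq_ij eq_g]] : ~~ injectiveb g.
  by apply/injectiveP => /leq_card; rewrite card_ord ltnn.
have le_T (x : 'I_#|T|.+1) : x <= #|T| by rewrite -ltnS.
case: (ltngtP i j) => [lt_ij | lt_ji | /val_inj eq_ij].
- by exists i, j.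
- by exists j, i.
- by rewrite eq_ij eqxx in neq_ij.
Qed.

Lemma L_anbm_nseq n m : L_anbm (nseq n a ++ nseq m b) <-> m <= n.
Proof.
split=> [[n' [m' [le_mn' E]]] | le_mn]; last by exists n, m.
have := congr1 (count_mem a) E; have := congr1 (count_mem b) E.
rewrite !count_cat !count_nseq /=; lia.
Qed.

Lemma L_anbm_not_in_RH : ~ in_RH L_anbm.
Proof.
case=> k [_ [Q [V [[r [_ r_accepts]] V_L]]]].
pose P j := nseq #|Q| a ++ nseq j b.
have accP j : j <= #|Q| -> accepting_run V (resolve r (P j)) (P j).
  by move=> le_jQ; apply/r_accepts/V_L/L_anbm_nseq.
pose state j :=
  if run_end V (q0 V) (vzero k) (resolve r (P j)) (P j) is Some (q, _)
  then q else q0 V.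
have [i [j [lt_ij le_jQ eq_state]]] := nat_fun_collision state.
have [q [run_i _]] := accP i (ltnW (leq_trans lt_ij le_jQ)).
have [q' [run_j _]] := accP j le_jQ.
move: eq_state; rewrite /state run_i run_j => eq_qq'; subst q'.
have P_ij : P j = P i ++ nseq (j - i) b by rewrite /P -catA -nseqD subnKC // ltnW.
have P_jQ : P #|Q| = P j ++ nseq (#|Q| - j) b by rewrite /P -catA -nseqD subnKC.
have : accepts V (P i ++ nseq (j - i) b ++ nseq (j - i) b ++ nseq (#|Q| - j) b).
  apply: resolve_pump run_i _ _; first by rewrite -P_ij.
  by rewrite catA -P_ij -P_jQ; apply: accP.
by move/V_L; rewrite /P -catA -!nseqD => /L_anbm_nseq; lia.
Qed.

Definition cst (c : int) : vec 1 := [ffun _ => c].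

(* State [true] reads the a's, [false] the b's. *)
Definition tA_inc : transition ab 1 bool := (true, a, cst 1, true).
Definition tA_keep : transition ab 1 bool := (true, a, cst 0, true).
Definition tB_enter : transition ab 1 bool := (true, b, cst (-1), false).
Definition tB_loop : transition ab 1 bool := (false, b, cst (-1), false).

Definition Vanbm : vass ab 1 bool := Vass true setT [:: tA_inc; tA_keep; tB_enter; tB_loop].

Lemma vzero1 : vzero 1 = cst 0.
Proof. by apply/ffunP => i; rewrite !ffunE. Qed.

Lemma vadd_cst c d : vadd (cst c) (cst d) = cst (c + d)%R.
Proof. by apply/ffunP => i; rewrite !ffunE. Qed.

Lemma forall_ge0_cst c : [forall i, 0 <= cst c i]%R = (0 <= c)%R.
Proof. by apply/forallP/idP => [/(_ ord0)|c_ge0 i]; rewrite ffunE. Qed.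

Lemma run_Vanbm_loop p t d j c :
  t \in delta Vanbm -> tsrc t = p -> ttgt t = p -> tupd t = cst d ->
  (0 <= c)%R -> (0 <= c + d *+ j)%R ->
  run_end Vanbm p (cst c) (nseq j t) (nseq j (tlab t)) = Some (p, cst (c + d *+ j)%R).
Proof.
move=> tV tsrcE ttgtE tupdE c_ge0 cj_ge0.
rewrite run_end_loop // => [|i|i]; rewrite ?tupdE ?ffunE //.
by congr (Some (_, _)); apply/ffunP => i; rewrite !ffunE.
Qed.

Lemma run_end_Vanbm_false ts w c q u :
  run_end Vanbm false (cst c) ts w = Some (q, u) ->
  w = nseq (size w) b /\ u = cst (c - (size w)%:Z)%R.
Proof.
elim: ts w c => [|t ts IH] [|x w] //= c.
  by case=> _ <-; rewrite subr0.
case: ifP => // /and4P [+ /eqP tsrcE /eqP <- _].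
rewrite !inE => /or4P [] /eqP Et; subst t => //.
rewrite /tupd /= vadd_cst => /IH [-> ->]; rewrite size_nseq; split => //.
by congr cst; lia.
Qed.

Lemma run_end_Vanbm_true ts w c q u :
  run_end Vanbm true (cst c) ts w = Some (q, u) ->
  exists n m, w = nseq n a ++ nseq m b /\ (u ord0 + m%:Z <= c + n%:Z)%R.
Proof.
elim: ts w c => [|t ts IH] [|x w] //= c.
  by case=> _ <-; exists 0, 0; rewrite ffunE !addr0.
case: ifP => // /and4P [+ /eqP tsrcE /eqP <- _].
rewrite !inE => /or4P [] /eqP Et; subst t => //; rewrite /tupd /= vadd_cst.
- by move=> /IH [n [m [-> le_um]]]; exists n.+1, m; split => //; lia.
- by move=> /IH [n [m [-> le_um]]]; exists n.+1, m; split => //; lia.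
- move=> /run_end_Vanbm_false [w_b ->]; exists 0, (size w).+1.
  by rewrite /= -w_b ffunE; split => //; lia.
Qed.

Lemma run_end_Vanbm_nseq_b m :
  exists ts q, run_end Vanbm true (cst m%:Z) ts (nseq m b) = Some (q, cst 0).
Proof.
case: m => [|m]; first by exists [::], true.
exists (tB_enter :: nseq m tB_loop), false; rewrite /= /tupd /= vadd_cst.
rewrite forall_ge0_cst !inE eqxx !orbT /=.
rewrite (@run_Vanbm_loop _ _ (-1)) ?inE ?eqxx ?orbT // mulNrn natz; try lia.
by congr (Some (_, cst _)); lia.
Qed.

Lemma Vanbm_accepts n m : m <= n -> accepts Vanbm (nseq n a ++ nseq m b).
Proof.
move=> le_mn; have [tsb [q run_b]] := run_end_Vanbm_nseq_b m.
exists (nseq (n - m) tA_keep ++ nseq m tA_inc ++ tsb), q; split; last by rewrite inE.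
have -> : nseq n a = nseq (n - m) a ++ nseq m a by rewrite -nseqD subnK.
rewrite -catA run_end_cat ?size_nseq // vzero1.
rewrite (@run_Vanbm_loop _ _ 0) ?inE ?eqxx ?orbT //= mul0rn addr0.
rewrite run_end_cat ?size_nseq // (@run_Vanbm_loop _ _ 1) ?inE ?eqxx ?orbT //=.
all: by rewrite ?add0r ?natz.
Qed.

Lemma L_anbm_in_RN1 : in_RN 1 L_anbm.
Proof.
exists bool, Vanbm => w; split.
- case=> ts [q [+ _]]; rewrite vzero1 => /run_end_Vanbm_true [n [m [-> le_mn]]].
  by apply/L_anbm_nseq; move: le_mn; rewrite ffunE; lia.
- by case=> n [m [le_mn ->]]; apply: Vanbm_accepts.
Qed.

Theorem mainTheorem5 : in_RN 1 L_anbm /\ ~ in_RH L_anbm.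
Proof. exact: (conj L_anbm_in_RN1 L_anbm_not_in_RH). Qed.
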